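(* Let $S\subset S^4$ be a round two-sphere and let $\varphi:\mathbb{Z}^2\to S$ be a discrete complex cross-ratio net. Then there exists a principal contact element net in $S^4$ congruent to $\varphi$.
   Context: $\mathbb{H}$ denotes the quaternions, $\mathbb{C}=\mathrm{span}_{\mathbb{R}}\{1,i\}\subset\mathbb{H}$; $\mathbb{H}^2$ (right $\mathbb{H}$-vector space) $\cong\mathbb{C}^4$, right multiplication by $j$ being $\mathbb{C}$-antilinear. $S^4\cong\mathbb{HP}^1=\{v\mathbb{H}\}$, $\mathbb{CP}^3=\mathbb{P}(\mathbb{C}^4)$; the twistor fibre over $v\mathbb{H}$ is the projective line through $[v],[vj]$. $Q^4=\{[\alpha]\in\mathbb{P}(\Lambda^2\mathbb{C}^4):\alpha\wedge\alpha=0\}$; $[v\wedge w]$ is identified with the line of $\mathbb{CP}^3$ through $[v],[w]$. The antilinear extension of $v\wedge w\mapsto vj\wedge wj$ gives a real structure $j$ on $Q^4$ whose fixed (''real'') points are the twistor fibres, identified with points of $S^4$. A round two-sphere with a conformal structure is $\{l:Sl=l\}$ for some $S\in\mathrm{End}_{\mathbb{H}}(\mathbb{H}^2)$, $S^2=-1$; this identifies the sphere conformally with $\mathbb{CP}^1$ (its twistor lift $\mathbb{P}\{v:Sv=vi\}$). A discrete complex cross-ratio net in $S\cong\mathbb{CP}^1$ is a map $\varphi:\mathbb{Z}^2\to S$ such that for every elementary face $[\varphi(m+1,n),\varphi(m,n),\varphi(m,n+1),\varphi(m+1,n+1)]=\lambda$ for a given $\lambda\in\mathbb{C}$, where $[z_1,z_2,z_3,z_4]=\frac{(z_1-z_2)(z_3-z_4)}{(z_2-z_3)(z_4-z_1)}$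 (the cross-ratio need not be real, so faces need not be circular). A null line is a projective line contained in $Q^4$; a contact element is a null line containing a real point. A principal contact element net is a map $\Phi$ from $\mathbb{Z}^2$ to null lines of $Q^4$ such that each $\Phi(m,n)$ is a contact element, their real points are distinct, and $\Phi(m,n)\cap\Phi(m+1,n)\neq\emptyset$, $\Phi(m,n)\cap\Phi(m,n+1)\neq\emptyset$. It is congruent to $\varphi$ if the real point $\varphi(k)$ lies on $\Phi(k)$ for each $k$. *)

From HB Require Import structures.
From mathcomp Require Import all_boot all_order all_algebra.
From mathcomp Require Import complex.
From mathcomp Require Import reals.
Set Implicit Arguments. Unset Strict Implicit. Unset Printing Implicit Defensive.
Import Order.TTheory GRing.Theory Num.Theory.
Local Open Scope ring_scope.

Section Twistor.
Variable R : realType.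
Local Notation C := (R[i]).

(* H^2 = C^4 (row vectors): a pair (a + j b, c + j d) of quaternions, a,b,c,d in C,
   is (a,b,c,d); right multiplication by C is scalar multiplication and
   right multiplication by j is the antilinear map
      (a,b,c,d) |-> (-conj b, conj a, -conj d, conj c). *)
Definition Jmat : 'M[C]_4 := \matrix_(a < 4, b < 4)
  (if (val a == 1%N) && (val b == 0%N) then -1
   else if (val a == 0%N) && (val b == 1%N) then 1
   else if (val a == 3%N) && (val b == 2%N) then -1
   else if (val a == 2%N) && (val b == 3%N) then 1 else 0).

Definition Jmap (v : 'rV[C]_4) : 'rV[C]_4 := map_mx (@conjc R) v *m Jmat.

Definition iC : C := Complex 0 1.

(* Lambda^2 C^4 = C^6, basis e0^e1, e0^e2, e0^e3, e1^e2, e1^e3, e2^e3. *)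
Definition fst6 (I : 'I_6) : 'I_4 := inord (nth 0%N [:: 0; 0; 0; 1; 1; 2]%N I).
Definition snd6 (I : 'I_6) : 'I_4 := inord (nth 0%N [:: 1; 2; 3; 2; 3; 3]%N I).

Definition wedge (v w : 'rV[C]_4) : 'rV[C]_6 :=
  \row_(I < 6) (v 0 (fst6 I) * w 0 (snd6 I) - v 0 (snd6 I) * w 0 (fst6 I)).

(* second compound matrix: matrix of Lambda^2 M, so that
   wedge (v *m M) (w *m M) = wedge v w *m compound2 M *)
Definition compound2 (M : 'M[C]_4) : 'M[C]_6 :=
  \matrix_(I < 6, K < 6) (wedge (row (fst6 I) M) (row (snd6 I) M)) 0 K.

(* The real structure j on Lambda^2 C^4: antilinear extension of
   v /\ w |-> vj /\ wj. *)
Definition jreal (al : 'rV[C]_6) : 'rV[C]_6 :=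
  map_mx (@conjc R) al *m compound2 Jmat.

(* alpha /\ alpha = 2 * klein alpha * e0^e1^e2^e3 *)
Definition klein (al : 'rV[C]_6) : C :=
  al 0 (inord 0) * al 0 (inord 5) - al 0 (inord 1) * al 0 (inord 4)
  + al 0 (inord 2) * al 0 (inord 3).

(* [alpha] is a point of Q^4 fixed by j (a "real point", i.e. a point of S^4) *)
Definition real_point (al : 'rV[C]_6) : Prop :=
  al != 0 /\ klein al = 0 /\ exists mu : C, jreal al = mu *: al.

(* A projective line of P(Lambda^2 C^4), given by a rank-2 matrix whose row space
   is the corresponding 2-plane, contained in Q^4. *)
Definition null_line (L : 'M[C]_(2, 6)) : Prop :=
  \rank L = 2%N /\ forall al : 'rV[C]_6, (al <= L)%MS -> klein al = 0.

Definition contact_element (L : 'M[C]_(2, 6)) : Prop :=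
  null_line L /\ exists al, real_point al /\ (al <= L)%MS.

Definition distinct_real_points (L L' : 'M[C]_(2, 6)) : Prop :=
  forall al be, real_point al -> (al <= L)%MS -> real_point be -> (be <= L')%MS ->
    ~~ (al == be)%MS.

Definition lines_meet (L L' : 'M[C]_(2, 6)) : Prop := (L :&: L')%MS != 0.

Definition principal_contact_element_net (Phi : int -> int -> 'M[C]_(2, 6)) : Prop :=
  (forall m n, contact_element (Phi m n)) /\
  (forall m n, distinct_real_points (Phi m n) (Phi (m + 1) n) /\
               distinct_real_points (Phi m n) (Phi m (n + 1))) /\
  (forall m n, lines_meet (Phi m n) (Phi (m + 1) n) /\
               lines_meet (Phi m n) (Phi m (n + 1))).

(* S in End_H(H^2): C-linear (v |-> v *m A) and commuting with right mult. by j *)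
Definition quaternionic (A : 'M[C]_4) : Prop :=
  forall v : 'rV[C]_4, Jmap (v *m A) = Jmap v *m A.

(* the twistor lift P{v : S v = v i} of the sphere {l : S l = l};
   v represents the point [v] of this CP^1, i.e. the point vH of S *)
Definition in_lift (A : 'M[C]_4) (v : 'rV[C]_4) : Prop :=
  v != 0 /\ v *m A = iC *: v.

(* The cross-ratio of four points [v1],..,[v4] of the projective line P(E)
   (E 2-dimensional) equals lam:
   (v1^v2) (x) (v3^v4) = lam * (v2^v3) (x) (v4^v1) in Lambda^2E (x) Lambda^2E,
   i.e. (z1-z2)(z3-z4) = lam (z2-z3)(z4-z1) in any affine coordinate;
   consecutive vertices of the quadrilateral are required to be distinct. *)
Definition cross_ratio_eq (v1 v2 v3 v4 : 'rV[C]_4) (lam : C) : Prop :=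
  wedge v1 v2 != 0 /\ wedge v2 v3 != 0 /\ wedge v3 v4 != 0 /\ wedge v4 v1 != 0 /\
  (wedge v1 v2)^T *m wedge v3 v4 = lam *: ((wedge v2 v3)^T *m wedge v4 v1).

Definition cross_ratio_net (A : 'M[C]_4) (phi : int -> int -> 'rV[C]_4) (lam : C) : Prop :=
  (forall m n, in_lift A (phi m n)) /\
  (forall m n, cross_ratio_eq (phi (m + 1) n) (phi m n) (phi m (n + 1))
                              (phi (m + 1) (n + 1)) lam).

(* The real point of Q^4 (twistor fibre through [v],[vj]) corresponding to [v]. *)
Definition real_point_of (v : 'rV[C]_4) : 'rV[C]_6 := wedge v (Jmap v).

Definition congruent (Phi : int -> int -> 'M[C]_(2, 6)) (phi : int -> int -> 'rV[C]_4) : Prop :=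
  forall m n, (real_point_of (phi m n) <= Phi m n)%MS.

End Twistor.

From HB Require Import structures.
From mathcomp Require Import all_boot all_order all_algebra.
From mathcomp Require Import complex.
From mathcomp Require Import reals.
From mathcomp Require Import ring.
Import Order.TTheory GRing.Theory Num.Theory.
Local Open Scope ring_scope.
Set Implicit Arguments. Unset Strict Implicit. Unset Printing Implicit Defensive.

(** The twistor lift E = {v : v A = v i} of the sphere is a complex 2-plane, and
    E j = {v : v A = - v i}, so that C^4 = E (+) E j.  At a vertex v of the net, with
    v' the next vertex in the first lattice direction, take the pencil of lines of
    CP^3 through [v] in the plane [v, vj, v']; in Q^4 it is the null line spanned by
    [v /\ vj] and [v /\ v'].  Every such pencil contains the point [Lambda^2 E], so
    neighbouring contact elements meet.  Because E and E j are complementary, the only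
    real point on the pencil at v is [v /\ vj], and it determines [v]; hence
    neighbouring real points are distinct as soon as neighbouring vertices are.  This
    is all the cross-ratio condition is used for. *)

Lemma sum_ord4 (V : zmodType) (F : 'I_4 -> V) :
  \sum_(i < 4) F i = F (inord 0) + F (inord 1) + F (inord 2) + F (inord 3).
Proof.
rewrite !big_ord_recr big_ord0 /= ?add0r.
by congr (_ + _ + _ + _); congr F; apply/val_inj; rewrite /= inordK.
Qed.

Lemma sum_ord5 (V : zmodType) (F : 'I_5 -> V) :
  \sum_(i < 5) F i = F (inord 0) + F (inord 1) + F (inord 2) + F (inord 3) + F (inord 4).
Proof.
rewrite !big_ord_recr big_ord0 /= ?add0r.
by congr (_ + _ + _ + _ + _); congr F; apply/val_inj; rewrite /= inordK.
Qed.

Lemma sum_ord6 (V : zmodType) (F : 'I_6 -> V) :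
  \sum_(i < 6) F i = F (inord 0) + F (inord 1) + F (inord 2) + F (inord 3)
   + F (inord 4) + F (inord 5).
Proof.
rewrite !big_ord_recr big_ord0 /= ?add0r.
by congr (_ + _ + _ + _ + _ + _); congr F; apply/val_inj; rewrite /= inordK.
Qed.

Lemma row_neq0_entry (F : zmodType) n (v : 'rV[F]_n) : v != 0 -> exists k, v 0 k != 0.
Proof.
move=> vn; apply/existsP; apply: contraR vn; rewrite negb_exists => /forallP H.
by apply/eqP/rowP => k; rewrite mxE; apply/eqP; move: (H k); rewrite negbK.
Qed.

Lemma mul_rV2_col_mx (F : pzRingType) n (D : 'rV[F]_2) (r1 r2 : 'rV[F]_n) :
  D *m (col_mx r1 r2 : 'M_(2, n)) = D 0 0 *: r1 + D 0 1 *: r2.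
Proof.
apply/rowP => k; rewrite !mxE !big_ord_recr big_ord0 /= add0r !mxE.
have -> : widen_ord (leqnSn 1) ord_max = 0 :> 'I_2 by apply/val_inj.
have -> : ord_max = 1 :> 'I_2 by apply/val_inj.
case: splitP => i /= Hi; case: splitP => j /= Hj; rewrite ?(ord1 i) ?(ord1 j) //.
by move: Hj; rewrite (ord1 j).
Qed.

Section TwistorLines.
Variable R : realType.
Local Notation C := (R[i]).
Local Notation ii := (iC R).
Implicit Types (v w x y p q z : 'rV[C]_4) (a b c : C).

Lemma wedgeN x y : wedge x y = - wedge y x.
Proof. by apply/rowP => I; rewrite !mxE; ring. Qed.

Lemma wedgexx x : wedge x x = 0.
Proof. by apply/rowP => I; rewrite !mxE; ring. Qed.

Lemma wedge0l x : wedge 0 x = 0.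
Proof. by apply/rowP => I; rewrite !mxE; ring. Qed.

Lemma wedgeZr x y a : wedge x (a *: y) = a *: wedge x y.
Proof. by apply/rowP => I; rewrite !mxE; ring. Qed.

Lemma wedge_linr x y z a b : wedge x (a *: y + b *: z) = a *: wedge x y + b *: wedge x z.
Proof. by apply/rowP => I; rewrite !mxE; ring. Qed.

Lemma wedge_linl x y z a b : wedge (a *: y + b *: z) x = a *: wedge y x + b *: wedge z x.
Proof. by apply/rowP => I; rewrite !mxE; ring. Qed.

Lemma klein_wedge x y : klein (wedge x y) = 0.
Proof. by rewrite /klein /wedge !mxE /fst6 /snd6 !inordK //=; ring. Qed.

(* The six Pluecker coordinates are the minors with a < b; the others follow by antisymmetry. *)
Lemma wedge_eq_minor p q x y c : wedge p q = c *: wedge x y ->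
  forall i j : 'I_4, p 0 i * q 0 j - p 0 j * q 0 i = c * (x 0 i * y 0 j - x 0 j * y 0 i).
Proof.
move=> H i j.
have E (I : 'I_6) : (wedge p q) 0 I = (c *: wedge x y) 0 I by rewrite H.
have E0 := E (inord 0); have E1 := E (inord 1); have E2 := E (inord 2).
have E3 := E (inord 3); have E4 := E (inord 4); have E5 := E (inord 5).
move: E0 E1 E2 E3 E4 E5; rewrite !mxE /fst6 /snd6 ?inordK //= => E0 E1 E2 E3 E4 E5.
rewrite -(inord_val i) -(inord_val j).
case: i => [[|[|[|[|?]]]] ?] //; case: j => [[|[|[|[|?]]]] ?] //=; try ring;
 try (rewrite E0 || rewrite E1 || rewrite E2 || rewrite E3 || rewrite E4 || rewrite E5; ring).
all: rewrite -[LHS]opprK opprB;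
 (rewrite E0 || rewrite E1 || rewrite E2 || rewrite E3 || rewrite E4 || rewrite E5); ring.
Qed.

Lemma wedge_eq0_colinear v z : v != 0 -> wedge v z = 0 -> exists t, z = t *: v.
Proof.
move=> vn H; have [k vk] := row_neq0_entry vn.
have P : wedge v z = 0 *: wedge v v by rewrite H scale0r.
exists (z 0 k / v 0 k); apply/rowP => j; rewrite mxE.
have := wedge_eq_minor P k j; rewrite mul0r => /eqP; rewrite subr_eq0 => /eqP Hj.
by apply: (mulIf vk); rewrite [LHS]mulrC Hj; field.
Qed.

(* Cramer's rule along a nonvanishing Pluecker coordinate of x /\ y. *)
Lemma wedge_propor_span p q x y c : c != 0 -> wedge p q = c *: wedge x y ->
  wedge x y != 0 -> exists a b, p = a *: x + b *: y.
Proof.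
move=> cn H wn; have [I wI] := row_neq0_entry wn.
move: wI; rewrite mxE; set i := fst6 I; set j := snd6 I => wI.
set om := x 0 i * y 0 j - x 0 j * y 0 i in wI *.
exists ((p 0 i * y 0 j - p 0 j * y 0 i) / om), ((x 0 i * p 0 j - x 0 j * p 0 i) / om).
apply/rowP => k; rewrite !mxE; apply: (mulIf wI).
rewrite [RHS](_ : _ = x 0 k * (p 0 i * y 0 j - p 0 j * y 0 i)
                      + y 0 k * (x 0 i * p 0 j - x 0 j * p 0 i)); last by field.
apply: (mulfI cn); apply/eqP; rewrite -subr_eq0.
have Hij := wedge_eq_minor H i j; have Hkj := wedge_eq_minor H k j.
have Hki := wedge_eq_minor H k i.
have -> : c * (p 0 k * om) - c * (x 0 k * (p 0 i * y 0 j - p 0 j * y 0 i) +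
    y 0 k * (x 0 i * p 0 j - x 0 j * p 0 i)) =
  p 0 k * (c * (x 0 i * y 0 j - x 0 j * y 0 i))
  - p 0 i * (c * (x 0 k * y 0 j - x 0 j * y 0 k))
  + p 0 j * (c * (x 0 k * y 0 i - x 0 i * y 0 k)) by rewrite /om; ring.
by rewrite -Hij -Hkj -Hki; apply/eqP; ring.
Qed.

Lemma wedge_neq0_indep p q a b : wedge p q != 0 -> a *: p + b *: q = 0 -> a = 0 /\ b = 0.
Proof.
move=> nz H.
have H1 : wedge p (a *: p + b *: q) = 0 by rewrite H; apply/rowP => I; rewrite !mxE; ring.
have H2 : wedge (a *: p + b *: q) q = 0 by rewrite H; apply/rowP => I; rewrite !mxE; ring.
rewrite wedge_linr wedgexx scaler0 add0r in H1.
rewrite wedge_linl wedgexx scaler0 addr0 in H2.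
by move/eqP: H1; move/eqP: H2; rewrite !scaler_eq0 (negbTE nz) !orbF => /eqP -> /eqP ->.
Qed.

Lemma JmapE v (j : 'I_4) : Jmap v 0 j =
  [:: - (v 0 (inord 1))^*; (v 0 (inord 0))^*; - (v 0 (inord 3))^*; (v 0 (inord 2))^*]%C`_j.
Proof.
rewrite /Jmap mxE sum_ord4 !mxE ?inordK //=.
by rewrite -(inord_val j); case: j => [[|[|[|[|?]]]] ?] //=; rewrite ?inordK //=; ring.
Qed.

Lemma JmapJ v : Jmap (Jmap v) = - v.
Proof.
apply/rowP => j; rewrite JmapE [RHS]mxE.
rewrite -(inord_val j); case: j => [[|[|[|[|?]]]] ?] //=;
  rewrite !inordK //= !JmapE !inordK //= ?rmorphN //; congr (- _); apply: conjcK.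
Qed.

Lemma JmapZ a v : Jmap (a *: v) = a^*%C *: Jmap v.
Proof.
apply/rowP => j; rewrite [RHS]mxE !JmapE.
rewrite -(inord_val j); case: j => [[|[|[|[|?]]]] ?] //=;
  by rewrite ?inordK //= !mxE rmorphM /=; ring.
Qed.

Lemma JmapD v w : Jmap (v + w) = Jmap v + Jmap w.
Proof.
apply/rowP => j; rewrite [RHS]mxE !JmapE.
rewrite -(inord_val j); case: j => [[|[|[|[|?]]]] ?] //=;
  by rewrite ?inordK //= !mxE rmorphD /=; ring.
Qed.

Lemma Jmap_eq0 v : (Jmap v == 0) = (v == 0).
Proof.
apply/eqP/eqP => [Jv0|->]; last by rewrite -(scale0r 0) JmapZ rmorph0 !scale0r.
apply/eqP; rewrite -oppr_eq0 -JmapJ Jv0.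
by rewrite -(scale0r 0) JmapZ rmorph0 !scale0r.
Qed.

Lemma Jmap_inj : injective (@Jmap R).
Proof.
move=> v w H; apply/eqP; rewrite -subr_eq0 -Jmap_eq0.
by rewrite -scaleN1r JmapD JmapZ H rmorphN rmorph1 scaleN1r subrr.
Qed.

Lemma jreal_wedge x y : jreal (wedge x y) = wedge (Jmap x) (Jmap y).
Proof.
apply/rowP => K; rewrite [RHS]mxE !JmapE /jreal mxE sum_ord6 !mxE.
rewrite -(inord_val K); case: K => [[|[|[|[|[|[|?]]]]]] ?] //=;
  rewrite /fst6 /snd6 ?inordK //= !rmorphB !rmorphM /=; ring.
Qed.

Definition i_eigen (A : 'M[C]_4) v := v *m A = ii *: v.
Definition mi_eigen (A : 'M[C]_4) v := v *m A = - ii *: v.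

Variable A : 'M[C]_4.
Hypothesis HAq : quaternionic A.

Lemma i_eigen_Jmap v : i_eigen A v -> mi_eigen A (Jmap v).
Proof.
have conj_iC : ii^*%C = - ii by apply/eqP; rewrite /iC eq_complex /= oppr0 !eqxx.
by move=> Ev; rewrite /mi_eigen -HAq Ev JmapZ conj_iC.
Qed.

Lemma i_eigen_lin x y a b : i_eigen A x -> i_eigen A y -> i_eigen A (a *: x + b *: y).
Proof.
by move=> Ex Ey; rewrite /i_eigen mulmxDl -!scalemxAl Ex Ey !scalerA scalerDr !scalerA
  [ii * a]mulrC [ii * b]mulrC.
Qed.

Lemma mi_eigen_lin x y a b : mi_eigen A x -> mi_eigen A y -> mi_eigen A (a *: x + b *: y).
Proof.
by move=> Ex Ey; rewrite /mi_eigen mulmxDl -!scalemxAl Ex Ey !scalerA scalerDr !scalerA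
  [- ii * a]mulrC [- ii * b]mulrC.
Qed.

Lemma i_eigenZ x a : i_eigen A x -> i_eigen A (a *: x).
Proof. by move=> Ex; rewrite -[a *: x]addr0 -(scale0r x); apply: i_eigen_lin. Qed.

Lemma mi_eigen_JmapZ x a : i_eigen A x -> mi_eigen A (a *: Jmap x).
Proof.
move=> Ex; rewrite -[a *: _]addr0 -(scale0r (Jmap x)).
by apply: mi_eigen_lin; apply: i_eigen_Jmap.
Qed.

Lemma eigen_sum_eq0 x y : i_eigen A x -> mi_eigen A y -> x + y = 0 -> x = 0 /\ y = 0.
Proof.
move=> Ex Fy H; move/eqP: (H); rewrite addr_eq0 => /eqP Hx.
suff y0 : y = 0 by split => //; rewrite Hx y0 oppr0.
have iC2_neq0 : ii *+ 2 != 0.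
  by rewrite mulrn_eq0 /=; apply/eqP => -[] /eqP; rewrite oner_eq0.
have : (x + y) *m A = 0 by rewrite H mul0mx.
rewrite mulmxDl Ex Fy Hx scalerN -scaleNr -scalerDl -opprD -mulr2n scaleNr.
by move/eqP; rewrite oppr_eq0 scaler_eq0 (negbTE iC2_neq0) => /eqP.
Qed.

(* E j has the same dimension as E and meets it trivially, so dim E <= 2: a linear
   relation among p, q, x, p j, q j must have its E-part vanish. *)
Lemma i_eigen_span p q x : i_eigen A p -> i_eigen A q -> i_eigen A x ->
  wedge p q != 0 -> exists a b, x = a *: p + b *: q.
Proof.
move=> Ep Eq Ex nz.
pose M : 'M[C]_(5, 4) := \matrix_(k < 5) [:: p; q; x; Jmap p; Jmap q]`_k.
have : kermx M != 0.
  rewrite -mxrank_eq0 mxrank_ker subn_eq0 -ltnNge.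
  exact: leq_ltn_trans (rank_leq_col M) _.
case/rowV0Pn => d /sub_kermxP dM dn.
rewrite mulmx_sum_row sum_ord5 !rowK !inordK //= in dM.
set d0 := d 0 (inord 0) in dM; set d1 := d 0 (inord 1) in dM.
set d2 := d 0 (inord 2) in dM; set d3 := d 0 (inord 3) in dM; set d4 := d 0 (inord 4) in dM.
have Epart : i_eigen A (d0 *: p + d1 *: q + d2 *: x).
  rewrite -[d0 *: p + d1 *: q]scale1r; apply: i_eigen_lin => //; exact: i_eigen_lin.
have Fpart : mi_eigen A (d3 *: Jmap p + d4 *: Jmap q).
  by apply: mi_eigen_lin; apply: i_eigen_Jmap.
have [e0 f0] : d0 *: p + d1 *: q + d2 *: x = 0 /\ d3 *: Jmap p + d4 *: Jmap q = 0.
  by apply: eigen_sum_eq0 Epart Fpart _; rewrite -dM !addrA.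
have [/eqP c3 /eqP c4] : d3^*%C = 0 /\ d4^*%C = 0.
  apply: wedge_neq0_indep nz _; apply/eqP.
  by rewrite -Jmap_eq0 JmapD !JmapZ !conjcK f0.
rewrite !conjc_eq0 in c3 c4.
have [d20 | d2n] := eqVneq d2 0.
  move: e0; rewrite d20 scale0r addr0 => /(wedge_neq0_indep nz) [d00 d10].
  exfalso; move/eqP: dn; apply; apply/rowP => k; rewrite mxE.
  rewrite -(inord_val k); case: k => [[|[|[|[|[|?]]]]] ?] //=.
    exact: (eqP c3).
  exact: (eqP c4).
exists (- d0 / d2), (- d1 / d2).
apply: (scalerI d2n); rewrite scalerDr !scalerA ![d2 * _]mulrC !divfK // !scaleNr.
apply/eqP; rewrite -subr_eq0; apply/eqP; rewrite -e0.
by rewrite opprD !opprK addrC.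
Qed.

Lemma i_eigen_wedge_propor p q x y : i_eigen A p -> i_eigen A q -> i_eigen A x ->
  i_eigen A y -> wedge p q != 0 -> exists c, wedge x y = c *: wedge p q.
Proof.
move=> Ep Eq Ex Ey nz.
have [a [b ->]] := i_eigen_span Ep Eq Ex nz.
have [c [d ->]] := i_eigen_span Ep Eq Ey nz.
by exists (a * d - b * c); apply/rowP => I; rewrite !mxE; ring.
Qed.

Lemma i_eigen_real_point_of_neq0 v : i_eigen A v -> v != 0 -> real_point_of v != 0.
Proof.
move=> Ev vn; apply/eqP => /(wedge_eq0_colinear vn) [t Ht].
have := eigen_sum_eq0 (i_eigenZ (- t) Ev) (i_eigen_Jmap Ev).
rewrite Ht scaleNr addNr => /(_ erefl) [_ /eqP]; rewrite -Ht.
by rewrite Jmap_eq0 (negbTE vn).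
Qed.

Lemma i_eigen_real_point v : i_eigen A v -> v != 0 -> real_point (real_point_of v).
Proof.
move=> Ev vn; split; first exact: i_eigen_real_point_of_neq0.
split; first exact: klein_wedge.
exists 1; rewrite scale1r /real_point_of jreal_wedge JmapJ.
by apply/rowP => I; rewrite !mxE; ring.
Qed.

(* w = a v + b vj, and the E-part of this relation forces w = a v. *)
Lemma real_point_of_propor v w c : i_eigen A v -> i_eigen A w -> v != 0 -> c != 0 ->
  real_point_of w = c *: real_point_of v -> wedge v w = 0.
Proof.
move=> Ev Ew vn cn HR.
have [a [b Hw]] := wedge_propor_span cn HR (i_eigen_real_point_of_neq0 Ev vn).
have Epart : i_eigen A (a *: v + (-1) *: w) by apply: i_eigen_lin.
have H0 : a *: v + (-1) *: w + b *: Jmap v = 0 by rewrite scaleN1r addrAC -Hw subrr.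
have [e0 _] := eigen_sum_eq0 Epart (mi_eigen_JmapZ b Ev) H0.
have -> : w = a *: v by move: e0; rewrite scaleN1r => /eqP; rewrite subr_eq0 eq_sym => /eqP.
by rewrite wedgeZr wedgexx scaler0.
Qed.

Definition pencil v v' : 'M[C]_(2, 6) := col_mx (real_point_of v) (wedge v v').

Lemma sub_pencilP (al : 'rV[C]_6) v v' :
  (al <= pencil v v')%MS <-> exists a b, al = wedge v (a *: Jmap v + b *: v').
Proof.
split => [/submxP [D ->]|[a [b ->]]].
  by exists (D 0 0), (D 0 1); rewrite mul_rV2_col_mx wedge_linr.
apply/submxP; exists (\row_(k < 2) [:: a; b]`_k).
by rewrite mul_rV2_col_mx wedge_linr !mxE.
Qed.

Section Pencil.
Variables v v' : 'rV[C]_4.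
Hypotheses (Ev : i_eigen A v) (Ev' : i_eigen A v') (nz : wedge v v' != 0).

Let vn : v != 0.
Proof. by apply: contraNneq nz => ->; rewrite wedge0l. Qed.

Lemma pencil_rank : \rank (pencil v v') = 2%N.
Proof.
apply/eqP; change (row_free (pencil v v')); apply: inj_row_free => D.
rewrite mul_rV2_col_mx -wedge_linr => /(wedge_eq0_colinear vn) [t Ht].
have Epart : i_eigen A (D 0 1 *: v' + (- t) *: v) by apply: i_eigen_lin.
have H0 : D 0 1 *: v' + - t *: v + D 0 0 *: Jmap v = 0.
  by rewrite scaleNr addrAC [D 0 1 *: v' + _]addrC Ht subrr.
have [e0 f0] := eigen_sum_eq0 Epart (mi_eigen_JmapZ _ Ev) H0.
rewrite addrC in e0; have [_ d1] := wedge_neq0_indep nz e0.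
move/eqP: f0; rewrite scaler_eq0 Jmap_eq0 (negbTE vn) orbF => /eqP d0.
by apply/rowP => k; rewrite mxE; case: k => -[|[|?]] ? //=;
  [rewrite -d0 | rewrite -d1]; congr (D 0 _); apply/val_inj.
Qed.

Lemma pencil_contact_element : contact_element (pencil v v').
Proof.
split; first split.
- exact: pencil_rank.
- by move=> al /sub_pencilP [a [b ->]]; apply: klein_wedge.
exists (real_point_of v); split; first exact: i_eigen_real_point.
by apply/sub_pencilP; exists 1, 0; rewrite scale1r scale0r addr0.
Qed.

(* If al = v /\ z is real, then vj /\ zj = mu (v /\ z), so vj lies in the plane of v and z. *)
Lemma pencil_real_point al : (al <= pencil v v')%MS -> real_point al ->
  exists c, al = c *: real_point_of v.
Proof.
move=> /sub_pencilP [a [b Hal]] [aln [_ [mu Hmu]]].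
exists a; move: Hal Hmu aln; set z := a *: Jmap v + b *: v' => Hal.
rewrite Hal jreal_wedge => Hmu aln.
have [mu0 | mun] := eqVneq mu 0.
  have Jvn : Jmap v != 0 by rewrite Jmap_eq0.
  move: Hmu; rewrite mu0 scale0r => /(wedge_eq0_colinear Jvn) [t Ht].
  have zE : z = t^*%C *: v by apply: Jmap_inj; rewrite JmapZ conjcK.
  by move: aln; rewrite zE wedgeZr wedgexx scaler0 eqxx.
have [al1 [be1 HS]] := wedge_propor_span mun Hmu aln.
have H0 : (al1 *: v + (be1 * b) *: v') + (be1 * a - 1) *: Jmap v = 0.
  move: HS; rewrite /z; move: (Jmap v) => J HS.
  apply/rowP => k; move/rowP: HS => /(_ k); rewrite !mxE => Hk.
  transitivity (al1 * v 0 k + be1 * (a * J 0 k + b * v' 0 k) - J 0 k); first ring.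
  by rewrite -Hk subrr.
have Epart : i_eigen A (al1 *: v + (be1 * b) *: v') by apply: i_eigen_lin.
have [e0 f0] := eigen_sum_eq0 Epart (mi_eigen_JmapZ _ Ev) H0.
have [_ /eqP] := wedge_neq0_indep nz e0; rewrite mulf_eq0 => /orP [/eqP be0|/eqP b0].
  move/eqP: f0; rewrite scaler_eq0 Jmap_eq0 (negbTE vn) orbF be0 mul0r sub0r.
  by rewrite oppr_eq0 oner_eq0.
by rewrite /z b0 scale0r addr0 wedgeZr.
Qed.

Lemma pencil_meet w w' : i_eigen A w -> i_eigen A w' -> wedge w w' != 0 ->
  lines_meet (pencil v v') (pencil w w').
Proof.
move=> Ew Ew' nz'.
have [c Hc] := i_eigen_wedge_propor Ew Ew' Ev Ev' nz'.
apply/rowV0Pn; exists (wedge v v') => //.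
rewrite sub_capmx; apply/andP; split; apply/sub_pencilP.
  by exists 0, 1; rewrite scale0r add0r scale1r.
by exists 0, c; rewrite scale0r add0r wedgeZr -Hc.
Qed.

End Pencil.

Lemma pencil_distinct_real_points v v' w w' :
  i_eigen A v -> i_eigen A v' -> i_eigen A w -> i_eigen A w' ->
  wedge v v' != 0 -> wedge w w' != 0 -> wedge v w != 0 ->
  distinct_real_points (pencil v v') (pencil w w').
Proof.
move=> Ev Ev' Ew Ew' nz nz' nzvw al be ral alP rbe beP.
have vn : v != 0 by apply: contraNneq nzvw => ->; rewrite wedge0l.
have [c Hc] := pencil_real_point Ev Ev' nz alP ral.
have [c' Hc'] := pencil_real_point Ew Ew' nz' beP rbe.
have aln : al != 0 by case: ral.
apply/negP => /andP [/submxP [D HD] _].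
rewrite [D]mx11_scalar mul_scalar_mx in HD.
have dn : D 0 0 * c' != 0.
  by apply: contraNneq aln => e0; rewrite HD Hc' scalerA e0 scale0r.
have cd : c / (D 0 0 * c') != 0.
  by rewrite mulf_neq0 ?invr_eq0 //; apply: contraNneq aln => c0; rewrite Hc c0 scale0r.
move/eqP: nzvw; apply; apply: (real_point_of_propor Ev Ew vn cd).
apply: (scalerI dn); rewrite scalerA [_ * (c / _)]mulrC divfK //.
by rewrite -Hc HD Hc' scalerA.
Qed.

End TwistorLines.

Theorem mainTheorem3 (R : realType) (A : 'M[R[i]]_4)
  (HAq : quaternionic A) (HA2 : A *m A = -1)
  (phi : int -> int -> 'rV[R[i]]_4) (lam : R[i]) :
  cross_ratio_net A phi lam ->
  exists Phi : int -> int -> 'M[R[i]]_(2, 6),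
    principal_contact_element_net Phi /\ congruent Phi phi.
Proof.
move=> [lift face].
have Eph m n : i_eigen A (phi m n) by case: (lift m n).
have nz_m m n : wedge (phi m n) (phi (m + 1) n) != 0.
  by case: (face m n) => h _; rewrite wedgeN oppr_eq0.
have nz_n m n : wedge (phi m n) (phi m (n + 1)) != 0 by case: (face m n) => _ [].
exists (fun m n => pencil (phi m n) (phi (m + 1) n)); split; last first.
  by move=> m n; apply/sub_pencilP; exists 1, 0; rewrite scale1r scale0r addr0.
split; [|split] => m n.
- exact: pencil_contact_element.
- by split; apply: pencil_distinct_real_points.
- by split; apply: pencil_meet.
Qed.
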